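(* Let $\Gamma$ be a reachability-price game on a simple single-clock timed automaton (in the setting described in the context), and let $I_1=[b_1,r]$ and $I_2=[r,e_2]$ be intervals contained in $[0,1]$. Let $\Gamma'_{I_1}=\mathrm{CostConsistent}(\Gamma_{I_1},\mathrm{OptCost}_{\Gamma_{I_2}})$. Then for every location $l$ of $\Gamma$ and every $x\in I_1\cup I_2$, $$\big(\mathrm{OptCost}_{\Gamma'_{I_1}}\oplus\mathrm{OptCost}_{\Gamma_{I_2}}\big)(l,x)=\mathrm{OptCost}_{\Gamma_{I_1\cup I_2}}(l,x),$$ i.e. $\mathrm{OptCost}_{\Gamma_{I_1\cup I_2}}(l,x)$ equals $\mathrm{OptCost}_{\Gamma'_{I_1}}(l,x)$ for $x\in I_1$ and equals $\mathrm{OptCost}_{\Gamma_{I_2}}(l,x)$ for $x\in I_2\setminus I_1$.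
   Context: Setting: a game $\Gamma$ consists of a finite set of locations $L=L^{\mathrm{Min}}\cup L^{\mathrm{Max}}$ (disjoint), goal locations $L^{\mathrm{Goal}}\subseteq L$ each assigned a cost function (continuous, non-increasing, piecewise affine with finitely many pieces, real-valued), an edge set $E\subseteq L\times L$ (all guards true, no resets, discrete transitions have price $0$), an urgency map $\mathrm{urg}:L\to\{0,1\}$ and price rates $\pi:L\to\mathbb{N}$. For an interval $J=[b,e]\subseteq[0,1]$, the restricted game $\Gamma_J$ has states $L\times J$, goal cost functions restricted to $J$, discrete transitions $(l,x)\to(l',x)$ for $(l,l')\in E$ with price $0$, and continuous transitions $(l,x)\xrightarrow{t}(l,x+t)$ for $t>0$, $\mathrm{urg}(l)=0$, $x+t\le e$, with price $\pi(l)t$. Runs are finite or infinite sequences of consecutive transitions, not containing infinitely many consecutive continuous transitions. Strategies of the minimizer (maximizer) map finite runs ending in states with location in $L^{\mathrm{Min}}$ ($L^{\mathrm{Max}}$) to an available transition; $\mathrm{Run}(s,\mu,\chi)$ is the unique resulting run. The cost of a run that first visits a goal location $l$ at state $(l,x)$ after $n$ transitions is (goal cost function of $l$)$(x)$ plus the sum of the prices of the first $n$ transitions, and $\infty$ if no goal location is visited. $\mathrm{OptCost}_{\Gamma_J}(s)=\inf_\mu\sup_\chi\mathrm{Cost}(\mathrm{Run}(s,\mu,\chi))$; it is assumed finite from every state. A location $l$ is non-urgent if $l\notin L^{\mathrm{Goal}}$ and $\mathrm{urg}(l)=0$. Override: for $h:D_1\to\mathbb{R}$, $g:D_2\to\mathbb{R}$,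 $(h\oplus g)(z)=h(z)$ if $z\in D_1$ and $g(z)$ if $z\in D_2\setminus D_1$. $\Gamma[L^{\mathrm{Goal}}\cup l,h]$ denotes the game obtained by adding $l$ (possibly a fresh location) to the goal locations with cost function $h$ (overriding any previous one); $\Gamma[E\cup e]$ adds edge $e$. $\mathrm{CostConsistent}(\Gamma_{I_1},\mathrm{OptCost}_{\Gamma_{I_2}})$, for $I_1=[b_1,r]$, $I_2=[r,e_2]$, is obtained from $\Gamma$ by, for each non-urgent location $l_i$ of $\Gamma$ ($i=1,\dots,k$), adding a fresh goal location $l_i'$ with cost function $x\mapsto\mathrm{OptCost}_{\Gamma_{I_2}}(l_i,r)+(r-x)\pi(l_i)$ and adding the edge $(l_i,l_i')$, and then restricting the resulting game to $I_1$. *)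

From Stdlib Require Import Reals List ClassicalEpsilon.
Import ListNotations.
Open Scope R_scope.
Set Implicit Arguments.

(* A game: ownership (true = Min, false = Max), edges, urgency (true = urgent,
   i.e. urg = 1), price rates, and goal cost functions (None = not a goal). *)
Record Game (L : Type) := mkGame {
  gmin   : L -> bool;
  gedge  : L -> L -> Prop;
  gurg   : L -> bool;
  gprice : L -> nat;
  ggoal  : L -> option (R -> R)
}.

(* Transitions: discrete move to a location (price 0, no guard, no reset),
   or a delay t (price pi(l) * t). *)
Inductive trans (L : Type) : Type :=
| Disc  : L -> trans L
| Delay : R -> trans L.
Arguments Delay {L} _.

Definition step {L} (s : L * R) (tr : trans L) : L * R :=
  match tr with
  | Disc l' => (l', snd s)
  | Delay t => (fst s, snd s + t)
  end.

Definition cur {L} (s0 : L * R) (h : list (trans L)) : L * R :=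
  fold_left step h s0.

Definition tprice {L} (G : Game L) (s : L * R) (tr : trans L) : R :=
  match tr with
  | Disc _ => 0
  | Delay t => INR (gprice G (fst s)) * t
  end.

Fixpoint hprice {L} (G : Game L) (s : L * R) (h : list (trans L)) : R :=
  match h with
  | [] => 0
  | tr :: h' => tprice G s tr + hprice G (step s tr) h'
  end.

(* transition tr is available from state s in the game restricted to an
   interval with upper end e *)
Definition avail {L} (G : Game L) (e : R) (s : L * R) (tr : trans L) : Prop :=
  match tr with
  | Disc l' => gedge G (fst s) l'
  | Delay t => 0 < t /\ gurg G (fst s) = false /\ snd s + t <= e
  end.

Definition is_delay {L} (tr : trans L) : Prop :=
  match tr with Delay _ => True | Disc _ => False end.

(* A strategy maps a finite run (start state + transitions) to a transition. *)
Definition strat (L : Type) := L * R -> list (trans L) -> trans L.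

Fixpoint dchain {L} (sigma : strat L) (s0 : L * R) (h : list (trans L)) (n : nat)
  : list (trans L) :=
  match n with
  | O => h
  | S n' => let h' := dchain sigma s0 h n' in h' ++ [sigma s0 h']
  end.

(* A valid strategy of player p (true = Min) in the game restricted to an
   interval with upper end e: it chooses an available transition whenever
   one exists, and never produces infinitely many consecutive (available)
   continuous transitions. *)
Definition valid_strat {L} (G : Game L) (e : R) (p : bool) (sigma : strat L) : Prop :=
  (forall s0 h, gmin G (fst (cur s0 h)) = p ->
     (exists tr, avail G e (cur s0 h) tr) -> avail G e (cur s0 h) (sigma s0 h)) /\
  (forall s0 h, gmin G (fst (cur s0 h)) = p ->
     exists n, ~ (is_delay (sigma s0 (dchain sigma s0 h n)) /\
                  avail G e (cur s0 (dchain sigma s0 h n)) (sigma s0 (dchain sigma s0 h n)))).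

Fixpoint play {L} (G : Game L) (mu chi : strat L) (s0 : L * R) (n : nat)
  : list (trans L) :=
  match n with
  | O => []
  | S n' => let h := play G mu chi s0 n' in
            h ++ [if gmin G (fst (cur s0 h)) then mu s0 h else chi s0 h]
  end.

(* Run(s0, mu, chi) first visits a goal location after n transitions, and its
   cost is c.  (The run stops at a state with no available transition.) *)
Definition reaches {L} (G : Game L) (e : R) (s0 : L * R) (mu chi : strat L)
  (n : nat) (c : R) : Prop :=
  (exists g, ggoal G (fst (cur s0 (play G mu chi s0 n))) = Some g /\
     c = g (snd (cur s0 (play G mu chi s0 n))) + hprice G s0 (play G mu chi s0 n)) /\
  (forall m, (m < n)%nat ->
     ggoal G (fst (cur s0 (play G mu chi s0 m))) = None /\
     exists tr, avail G e (cur s0 (play G mu chi s0 m)) tr).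

(* Cost(Run(s0, mu, chi)) <= w   (the cost is +infinity if no goal is reached) *)
Definition cost_le {L} (G : Game L) (e : R) (s0 : L * R) (mu chi : strat L) (w : R)
  : Prop :=
  exists n c, reaches G e s0 mu chi n c /\ c <= w.

(* v = OptCost_{G_[b,e]}(s) = inf_mu sup_chi Cost(Run(s,mu,chi)), v finite *)
Definition isOptCost {L} (G : Game L) (b e : R) (s : L * R) (v : R) : Prop :=
  b <= snd s <= e /\
  (forall eps, 0 < eps -> exists mu, valid_strat G e true mu /\
     forall chi, valid_strat G e false chi -> cost_le G e s mu chi (v + eps)) /\
  (forall mu, valid_strat G e true mu -> forall w, w < v ->
     exists chi, valid_strat G e false chi /\ ~ cost_le G e s mu chi w).

(* OptCost of the restricted game G_[b,e] at state s (meaningful when finite) *)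
Definition OptCost {L} (G : Game L) (b e : R) (s : L * R) : R :=
  epsilon (inhabits 0) (isOptCost G b e s).

Definition pw_affine_01 (f : R -> R) : Prop :=
  exists (n : nat) (t : nat -> R),
    t O = 0 /\ t n = 1 /\
    (forall i, (i < n)%nat -> t i < t (S i)) /\
    (forall i, (i < n)%nat -> exists a c, forall x, t i <= x <= t (S i) -> f x = a * x + c).

Definition cost_fun_ok (f : R -> R) : Prop :=
  (forall x y, 0 <= x -> x <= y -> y <= 1 -> f y <= f x) /\
  (forall x, 0 <= x <= 1 -> forall eps, 0 < eps -> exists delta, 0 < delta /\
     forall y, 0 <= y <= 1 -> Rabs (y - x) < delta -> Rabs (f y - f x) < eps) /\
  pw_affine_01 f.

Definition game_ok {L} (G : Game L) : Prop :=
  (exists enum : list L, forall l, In l enum) /\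
  (forall l g, ggoal G l = Some g -> cost_fun_ok g).

Definition nonurgentb {L} (G : Game L) (l : L) : bool :=
  match ggoal G l with
  | None => negb (gurg G l)
  | Some _ => false
  end.

(* Locations of the new game: inl l = original l; inr l = fresh copy l'
   of a non-urgent location l. *)
Definition CCLoc {L} (G : Game L) : Type := (L + {l : L | nonurgentb G l = true})%type.

(* CostConsistent(G, OptCost_{G_[r,e2]}) before restriction to I1 = [b1, r]
   (the restriction is given by the interval passed to OptCost). *)
Definition CostConsistent {L} (G : Game L) (r e2 : R) : Game (CCLoc G) :=
  {| gmin := fun l => match l with inl l0 => gmin G l0 | inr _ => true end;
     gedge := fun l1 l2 => match l1, l2 with
                           | inl a, inl b => gedge G a b
                           | inl a, inr b => proj1_sig b = a
                           | _, _ => False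
                           end;
     gurg := fun l => match l with inl l0 => gurg G l0 | inr _ => true end;
     gprice := fun l => match l with inl l0 => gprice G l0 | inr _ => O end;
     ggoal := fun l => match l with
                       | inl l0 => ggoal G l0
                       | inr l0 => Some (fun x => OptCost G r e2 (proj1_sig l0, r)
                                          + (r - x) * INR (gprice G (proj1_sig l0)))
                       end |}.

(** The game [CostConsistent G r e2]
   restricted to [I1] is [G] restricted to [I1], where in addition Min may
   leave a non-urgent location [l] at time [x] to a fresh goal of cost
   [exit_cost (l, x) = OptCost_{I2}(l, r) + (r - x) * price l], the price of
   waiting until [r] and then playing optimally in [G_{I2}].

   The second half of the theorem is immediate: the lower end of the interval
   only constrains the initial time, so values over [[r, e2]] and
   [[b1, e2]] coincide (lemma [isOptCost_unique]).  For the first half we show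
   that [OptCost G b1 e2 (l, x)] satisfies both defining properties of the
   value of the CostConsistent game, by running a play of [G] and a play of
   the CostConsistent game side by side ([synced]) until the simulation breaks:
   - [upper_bound]: an eps-optimal Min strategy of [G_{[b1,e2]}] is lifted
     (a delay crossing [r] becomes an exit); Max's strategy is lowered to [G]
     until Min crosses [r] or Max exits, after which Max plays a counter
     strategy of [G] witnessing that the exit cost was not too low;
   - [lower_bound]: a Min strategy of the CostConsistent game is lowered to
     [G] until Min exits or Max crosses [r], after which Min plays a
     near-optimal strategy of [G_{I2}].
   Two one-step inequalities ([exit_cost_le_cross], [exit_cost_ge_cross])
   compare crossing [r] with exiting. *)

From Stdlib Require Import Reals Lra Lia List ClassicalEpsilon Classical.
Import ListNotations.
Open Scope R_scope.

Section Histories.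
Context {L : Type} (G : Game L).

Lemma cur_app (s : L * R) h1 h2 : cur s (h1 ++ h2) = cur (cur s h1) h2.
Proof. apply fold_left_app. Qed.

Lemma cur_snoc (s : L * R) h a : cur s (h ++ [a]) = step (cur s h) a.
Proof. rewrite cur_app. reflexivity. Qed.

Lemma hprice_app (s : L * R) h1 h2 :
  hprice G s (h1 ++ h2) = hprice G s h1 + hprice G (cur s h1) h2.
Proof.
  revert s; induction h1 as [|a h1 IH]; intros s; simpl.
  - ring.
  - rewrite IH. unfold cur. simpl. ring.
Qed.

Lemma fst_step_delay (s : L * R) tr : is_delay tr -> fst (step s tr) = fst s.
Proof. destruct tr; simpl; tauto. Qed.

Lemma play_S (mu chi : strat L) s0 n :
  play G mu chi s0 (S n) = play G mu chi s0 n ++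
    [if gmin G (fst (cur s0 (play G mu chi s0 n))) then mu s0 (play G mu chi s0 n)
     else chi s0 (play G mu chi s0 n)].
Proof. reflexivity. Qed.

End Histories.

Section DelaysEnd.
Context {L : Type} (G : Game L) (e : R).

Lemma dchain_S (sg : strat L) s0 h n :
  dchain sg s0 h (S n) = dchain sg s0 (h ++ [sg s0 h]) n.
Proof.
  induction n as [|n IH]; [reflexivity|].
  change (dchain sg s0 h (S (S n))) with
    (dchain sg s0 h (S n) ++ [sg s0 (dchain sg s0 h (S n))]).
  rewrite IH. reflexivity.
Qed.

Lemma dchain_ext (sg : strat L) s0 h n : exists k, dchain sg s0 h n = h ++ k.
Proof.
  induction n as [|n [k Hk]].
  - exists []. rewrite app_nil_r. reflexivity.
  - simpl. rewrite Hk. exists (k ++ [sg s0 (h ++ k)]). rewrite app_assoc. reflexivity.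
Qed.

Definition avail_delay (s : L * R) (tr : trans L) : Prop := is_delay tr /\ avail G e s tr.

Definition delays_end (sg : strat L) s0 h : Prop :=
  exists n, ~ avail_delay (cur s0 (dchain sg s0 h n)) (sg s0 (dchain sg s0 h n)).

Lemma delays_end_step sg s0 h : delays_end sg s0 (h ++ [sg s0 h]) -> delays_end sg s0 h.
Proof. intros [n Hn]. exists (S n). rewrite dchain_S. exact Hn. Qed.

Lemma delays_end_now sg s0 h : ~ avail_delay (cur s0 h) (sg s0 h) -> delays_end sg s0 h.
Proof. intros H. exists O. exact H. Qed.

(* Once the end [e] of the interval is reached, no delay is available. *)
Lemma delays_end_at_e sg s0 h : e <= snd (cur s0 h) -> delays_end sg s0 h.
Proof.
  intros H. apply delays_end_now. intros [Hd Ha].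
  destruct (sg s0 h); simpl in *; [contradiction|lra].
Qed.

Lemma delays_end_agree sg sg' s0 h :
  (forall k, sg s0 (h ++ k) = sg' s0 (h ++ k)) -> delays_end sg' s0 h -> delays_end sg s0 h.
Proof.
  intros Hag [n Hn]. exists n.
  assert (E : forall m, dchain sg s0 h m = dchain sg' s0 h m).
  { induction m as [|m IH]; [reflexivity|]. simpl. rewrite IH.
    destruct (dchain_ext sg' s0 h m) as [k Hk]. rewrite Hk, Hag. reflexivity. }
  rewrite E. destruct (dchain_ext sg' s0 h n) as [k Hk]. rewrite Hk in *. rewrite Hag. exact Hn.
Qed.

Lemma valid_delays_end p sg : valid_strat G e p sg ->
  forall s0 h, gmin G (fst (cur s0 h)) = p -> delays_end sg s0 h.
Proof. intros [_ H] s0 h Hp. exact (H s0 h Hp). Qed.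

Lemma valid_intro p sg :
  (forall s0 h, gmin G (fst (cur s0 h)) = p ->
     (exists tr, avail G e (cur s0 h) tr) -> avail G e (cur s0 h) (sg s0 h)) ->
  (forall s0 h, gmin G (fst (cur s0 h)) = p -> delays_end sg s0 h) ->
  valid_strat G e p sg.
Proof. intros H1 H2. split; [exact H1|exact H2]. Qed.

End DelaysEnd.

Lemma delays_end_transfer {L1 L2 : Type} (G1 : Game L1) e1 (s1 : strat L1)
  (G2 : Game L2) e2 (s2 : strat L2) (a1 : L1 * R) (a2 : L2 * R)
  (Rel : list (trans L1) -> list (trans L2) -> Prop) :
  (forall h k, Rel h k -> avail_delay G1 e1 (cur a1 h) (s1 a1 h) ->
     (avail_delay G2 e2 (cur a2 k) (s2 a2 k) /\ Rel (h ++ [s1 a1 h]) (k ++ [s2 a2 k]))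
     \/ delays_end G1 e1 s1 a1 (h ++ [s1 a1 h])) ->
  forall h k, Rel h k -> delays_end G2 e2 s2 a2 k -> delays_end G1 e1 s1 a1 h.
Proof.
  intros Hyp h k HR [n Hn]. revert h k HR Hn.
  induction n as [|n IH]; intros h k HR Hn;
    (destruct (classic (avail_delay G1 e1 (cur a1 h) (s1 a1 h))) as [Ha|Ha];
     [|apply delays_end_now; exact Ha]);
    apply delays_end_step; destruct (Hyp h k HR Ha) as [[H1 H1']|H2]; auto.
  - contradiction.
  - eapply IH; [exact H1'|]. rewrite <- dchain_S. exact Hn.
Qed.

Fixpoint first_split {A : Type} (Q : list A -> Prop) (acc h : list A)
  : option (list A * list A) :=
  if excluded_middle_informative (Q acc) then Some (acc, h) else
  match h with [] => None | a :: h' => first_split Q (acc ++ [a]) h' end.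

Section FirstSplit.
Context {A : Type} (Q : list A -> Prop).

Lemma first_split_some acc h p k :
  first_split Q acc h = Some (p, k) -> p ++ k = acc ++ h /\ Q p.
Proof.
  revert acc; induction h as [|a h IH]; intros acc; simpl;
    destruct (excluded_middle_informative (Q acc)) as [Hq|Hq]; intros E; try discriminate.
  - inversion E; subst; auto.
  - inversion E; subst; auto.
  - destruct (IH _ E) as [E1 E2]. split; auto. rewrite E1, <- app_assoc. reflexivity.
Qed.

Lemma first_split_app acc h p k x :
  first_split Q acc h = Some (p, k) -> first_split Q acc (h ++ x) = Some (p, k ++ x).
Proof.
  revert acc; induction h as [|a h IH]; intros acc E; simpl in E |- *;
    destruct (excluded_middle_informative (Q acc)) as [Hq|Hq].
  - inversion E; subst. destruct x; simpl;
      destruct (excluded_middle_informative (Q p)); [reflexivity|contradiction|reflexivity|contradiction].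
  - discriminate.
  - inversion E; subst; reflexivity.
  - apply IH; auto.
Qed.

Lemma first_split_none acc h : first_split Q acc h = None -> ~ Q (acc ++ h).
Proof.
  revert acc; induction h as [|a h IH]; intros acc E; simpl in E;
    destruct (excluded_middle_informative (Q acc)) as [Hq|Hq]; try discriminate.
  - rewrite app_nil_r. exact Hq.
  - specialize (IH _ E). rewrite <- app_assoc in IH. exact IH.
Qed.

Lemma first_split_snoc acc h a : first_split Q acc h = None ->
  first_split Q acc (h ++ [a]) = None \/
  (first_split Q acc (h ++ [a]) = Some (acc ++ h ++ [a], []) /\ Q (acc ++ h ++ [a])).
Proof.
  revert acc; induction h as [|b h IH]; intros acc; simpl;
    destruct (excluded_middle_informative (Q acc)) as [Hq|Hq]; intros E; try discriminate.
  - destruct (excluded_middle_informative (Q (acc ++ [a]))); auto.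
  - destruct (IH _ E) as [H|[H1 H2]]; auto. right.
    rewrite <- app_assoc in H1, H2. simpl in *. auto.
Qed.

Lemma first_split_single a : ~ Q [] -> Q [a] -> first_split Q [] [a] = Some ([a], []).
Proof.
  intros H1 H2. simpl. destruct (excluded_middle_informative (Q [])); [contradiction|].
  simpl. destruct (excluded_middle_informative (Q [a])); [reflexivity|contradiction].
Qed.

Lemma first_split_growing (hh : nat -> list A) n :
  hh O = [] -> (forall m, exists a, hh (S m) = hh m ++ [a]) ->
  (forall m, (m < n)%nat -> first_split Q [] (hh m) = None) ->
  first_split Q [] (hh n) = None \/
  (first_split Q [] (hh n) = Some (hh n, []) /\ Q (hh n)).
Proof.
  intros H0 HS Hlt. destruct n as [|n].
  - rewrite H0. simpl. destruct (excluded_middle_informative (Q [])); auto.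
  - destruct (HS n) as [a Ha]. rewrite Ha.
    exact (first_split_snoc [] (hh n) a (Hlt n ltac:(lia))).
Qed.

End FirstSplit.

Section Strategies.
Context {L : Type} (G : Game L) (e : R).

Definition default_move (s0 : L * R) (h : list (trans L)) : trans L :=
  match excluded_middle_informative (exists l', gedge G (fst (cur s0 h)) l') with
  | left H => Disc (proj1_sig (constructive_indefinite_description _ H))
  | right _ => Delay (e - snd (cur s0 h))
  end.

Lemma default_move_cases s0 h :
  (exists l', default_move s0 h = Disc l' /\ gedge G (fst (cur s0 h)) l') \/
  (default_move s0 h = Delay (e - snd (cur s0 h)) /\ ~ exists l', gedge G (fst (cur s0 h)) l').
Proof.
  unfold default_move. destruct (excluded_middle_informative _) as [H|H]; [|auto].
  left. destruct (constructive_indefinite_description _ H) as [l' Hl']. simpl. eauto.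
Qed.

Lemma default_move_avail s0 h :
  (exists tr, avail G e (cur s0 h) tr) -> avail G e (cur s0 h) (default_move s0 h).
Proof.
  intros [tr Htr]. destruct (default_move_cases s0 h) as [[l' [-> Hl']]|[-> Hn]]; simpl; auto.
  destruct tr as [l'|t]; simpl in Htr.
  - exfalso. apply Hn. eauto.
  - destruct Htr as [H1 [H2 H3]]. repeat split; auto; lra.
Qed.

Lemma default_move_then_end sg s0 h :
  avail_delay G e (cur s0 h) (default_move s0 h) ->
  delays_end G e sg s0 (h ++ [default_move s0 h]).
Proof.
  intros [Hd _]. apply delays_end_at_e. rewrite cur_snoc.
  destruct (default_move_cases s0 h) as [[l' [E _]]|[E _]]; rewrite E in *; simpl in *;
    [contradiction|lra].
Qed.

Lemma default_move_delays_end s0 h : delays_end G e default_move s0 h.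
Proof.
  destruct (classic (avail_delay G e (cur s0 h) (default_move s0 h))) as [H|H].
  - apply delays_end_step, default_move_then_end, H.
  - apply delays_end_now, H.
Qed.

Lemma default_move_valid p : valid_strat G e p default_move.
Proof.
  apply valid_intro; intros; [apply default_move_avail; auto|apply default_move_delays_end].
Qed.

Definition repair (sg : strat L) : strat L := fun s0 h =>
  if excluded_middle_informative (avail G e (cur s0 h) (sg s0 h)) then sg s0 h
  else default_move s0 h.

Lemma repair_cases sg s0 h :
  (repair sg s0 h = sg s0 h /\ avail G e (cur s0 h) (sg s0 h)) \/
  repair sg s0 h = default_move s0 h.
Proof. unfold repair. destruct (excluded_middle_informative _); auto. Qed.

Lemma repair_avail sg s0 h :
  (exists tr, avail G e (cur s0 h) tr) -> avail G e (cur s0 h) (repair sg s0 h).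
Proof.
  intros H. unfold repair. destruct (excluded_middle_informative _); auto.
  apply default_move_avail; auto.
Qed.

Lemma repair_default sg s0 h :
  sg s0 h = default_move s0 h -> repair sg s0 h = default_move s0 h.
Proof. intros E. unfold repair. destruct (excluded_middle_informative _); auto. Qed.

Definition resume (sg : strat L) s0 p : strat L := fun s h =>
  if excluded_middle_informative (s = cur s0 p) then sg s0 (p ++ h) else sg s h.

Lemma resume_at sg s0 p h : resume sg s0 p (cur s0 p) h = sg s0 (p ++ h).
Proof.
  unfold resume. destruct (excluded_middle_informative _) as [_|n]; [reflexivity|].
  now exfalso.
Qed.

Lemma resume_valid pl sg s0 p : valid_strat G e pl sg -> valid_strat G e pl (resume sg s0 p).
Proof.
  intros Hv. apply valid_intro.
  - intros s h Hp Hex. unfold resume. destruct (excluded_middle_informative _) as [E|E].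
    + subst s. rewrite <- cur_app in *. apply (proj1 Hv); auto.
    + apply (proj1 Hv); auto.
  - intros s h Hp. destruct (excluded_middle_informative (s = cur s0 p)) as [E|E].
    + subst s.
      apply (delays_end_transfer G e (resume sg s0 p) G e sg (cur s0 p) s0
               (fun h k => k = p ++ h)) with (k := p ++ h); [|reflexivity|].
      * intros h' k -> Ha. left. rewrite resume_at in *. rewrite <- cur_app in Ha.
        split; [exact Ha|]. rewrite <- app_assoc. reflexivity.
      * apply (valid_delays_end G e pl); auto. rewrite cur_app. exact Hp.
    + apply (delays_end_agree G e _ sg); [|apply (valid_delays_end G e pl); auto].
      intros k. unfold resume. destruct (excluded_middle_informative _); [contradiction|reflexivity].
Qed.

Definition switch_at (base : strat L) (Q : L * R -> list (trans L) -> Prop)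
  (tau : L * R -> list (trans L) -> strat L) : strat L := fun s0 h =>
  match first_split (Q s0) [] h with
  | Some (p, k) => tau s0 p (cur s0 p) k
  | None => base s0 h
  end.

Lemma switch_at_after base Q tau s0 p k : first_split (Q s0) [] p = Some (p, []) ->
  switch_at base Q tau s0 (p ++ k) = tau s0 p (cur s0 p) k.
Proof. intros E. unfold switch_at. rewrite (first_split_app _ _ _ _ _ k E). reflexivity. Qed.

Lemma switch_at_before base Q tau s0 h :
  first_split (Q s0) [] h = None -> switch_at base Q tau s0 h = base s0 h.
Proof. intros E. unfold switch_at. rewrite E. reflexivity. Qed.

Lemma switch_at_valid pl base Q tau : valid_strat G e pl base ->
  (forall s0 p, valid_strat G e pl (tau s0 p)) -> valid_strat G e pl (switch_at base Q tau).
Proof.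
  intros Hb Ht.
  assert (After : forall s0 h p k, first_split (Q s0) [] h = Some (p, k) ->
            gmin G (fst (cur s0 h)) = pl -> delays_end G e (switch_at base Q tau) s0 h).
  { intros s0 h p k E Hp. destruct (first_split_some _ _ _ _ _ E) as [Eh _]. simpl in Eh.
    refine (delays_end_transfer G e (switch_at base Q tau) G e (tau s0 p) s0 (cur s0 p)
             (fun h' k' => first_split (Q s0) [] h' = Some (p, k')) _ h k E _).
    - intros h' k' E' Ha. left. destruct (first_split_some _ _ _ _ _ E') as [Eh' _].
      simpl in Eh'. unfold switch_at in *. rewrite E' in *. rewrite <- Eh', cur_app in Ha.
      split; [exact Ha|]. apply first_split_app; auto.
    - apply (valid_delays_end G e pl); auto. rewrite <- cur_app, Eh. exact Hp. }
  apply valid_intro.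
  - intros s0 h Hp Hex. unfold switch_at.
    destruct (first_split (Q s0) [] h) as [[p k]|] eqn:E; [|apply (proj1 Hb); auto].
    destruct (first_split_some _ _ _ _ _ E) as [Eh _]. simpl in Eh. rewrite <- Eh, cur_app in *.
    apply (proj1 (Ht s0 p)); auto.
  - intros s0 h Hp.
    destruct (first_split (Q s0) [] h) as [[p k]|] eqn:E; [eapply After; eauto|].
    refine (delays_end_transfer G e (switch_at base Q tau) G e base s0 s0
       (fun h' k' => h' = k' /\ first_split (Q s0) [] h' = None /\ gmin G (fst (cur s0 h')) = pl)
       _ h h (conj eq_refl (conj E Hp)) _); [|apply (valid_delays_end G e pl); auto].
    intros h' k' [-> [E' Hp']] Ha. rewrite switch_at_before in * by exact E'.
    assert (Hp'' : gmin G (fst (cur s0 (k' ++ [base s0 k']))) = pl).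
    { rewrite cur_snoc, fst_step_delay; [exact Hp'|apply Ha]. }
    destruct (first_split_snoc _ [] k' (base s0 k') E') as [N|[S1 _]].
    + left. auto.
    + right. eapply After; eauto.
Qed.

Definition first_then (s : L * R) (c0 : trans L) : strat L := fun s0 h =>
  if excluded_middle_informative (s0 = s /\ h = []) then c0 else default_move s0 h.

Lemma first_then_at s c0 : first_then s c0 s [] = c0.
Proof.
  unfold first_then. destruct (excluded_middle_informative _) as [_|n]; auto.
  exfalso; auto.
Qed.

Lemma first_then_valid pl s c0 : avail G e s c0 -> valid_strat G e pl (first_then s c0).
Proof.
  intros Hc.
  assert (Later : forall s0 h, ~ (s0 = s /\ h = []) -> delays_end G e (first_then s c0) s0 h).
  { intros s1 h1 Hn. apply (delays_end_agree G e _ default_move); [|apply default_move_delays_end].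
    intros k. unfold first_then.
    destruct (excluded_middle_informative _) as [[E1 E2]|]; [|reflexivity].
    exfalso. apply Hn. split; auto. destruct h1; [reflexivity|discriminate]. }
  apply valid_intro.
  - intros s0 h _ Hex. unfold first_then.
    destruct (excluded_middle_informative _) as [[-> ->]|_]; [exact Hc|].
    apply default_move_avail; auto.
  - intros s0 h _. destruct (classic (s0 = s /\ h = [])) as [[-> ->]|Hn]; [|apply Later; auto].
    destruct (classic (avail_delay G e (cur s []) (first_then s c0 s []))) as [Ha|Ha].
    + apply delays_end_step, Later. intros [_ E]. destruct (first_then s c0 s []); discriminate.
    + apply delays_end_now, Ha.
Qed.

Definition pick_counter (s : L * R) (mu : strat L) (w : R) : strat L :=
  epsilon (inhabits default_move) (fun chi => valid_strat G e false chi /\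
    ((exists chi', valid_strat G e false chi' /\ ~ cost_le G e s mu chi' w) ->
     ~ cost_le G e s mu chi w)).

Lemma pick_counter_spec s mu w : valid_strat G e false (pick_counter s mu w) /\
  ((exists chi', valid_strat G e false chi' /\ ~ cost_le G e s mu chi' w) ->
     ~ cost_le G e s mu (pick_counter s mu w) w).
Proof.
  unfold pick_counter. apply epsilon_spec.
  destruct (classic (exists chi', valid_strat G e false chi' /\ ~ cost_le G e s mu chi' w))
    as [[chi [H1 H2]]|H]; [exists chi; auto|].
  exists default_move. split; [apply default_move_valid|]. intros H'. contradiction.
Qed.

Definition pick_min (s : L * R) (w : R) : strat L :=
  epsilon (inhabits default_move) (fun mu => valid_strat G e true mu /\
    ((exists mu', valid_strat G e true mu' /\
        forall chi, valid_strat G e false chi -> cost_le G e s mu' chi w) ->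
     forall chi, valid_strat G e false chi -> cost_le G e s mu chi w)).

Lemma pick_min_spec s w : valid_strat G e true (pick_min s w) /\
    ((exists mu', valid_strat G e true mu' /\
        forall chi, valid_strat G e false chi -> cost_le G e s mu' chi w) ->
     forall chi, valid_strat G e false chi -> cost_le G e s (pick_min s w) chi w).
Proof.
  unfold pick_min. apply epsilon_spec.
  destruct (classic (exists mu', valid_strat G e true mu' /\
        forall chi, valid_strat G e false chi -> cost_le G e s mu' chi w))
    as [[mu [H1 H2]]|H]; [exists mu; auto|].
  exists default_move. split; [apply default_move_valid|]. intros H'. contradiction.
Qed.

End Strategies.

Section Runs.
Context {L : Type} (G : Game L) (e : R).

Lemma play_split mu chi s0 n p mu' chi' :
  play G mu chi s0 n = p ->
  (forall k, mu s0 (p ++ k) = mu' (cur s0 p) k) ->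
  (forall k, chi s0 (p ++ k) = chi' (cur s0 p) k) ->
  forall m, play G mu chi s0 (n + m) = p ++ play G mu' chi' (cur s0 p) m.
Proof.
  intros Hp Hmu Hchi m. induction m as [|m IH].
  - rewrite Nat.add_0_r, app_nil_r. exact Hp.
  - rewrite Nat.add_succ_r. simpl. rewrite IH, cur_app, Hmu, Hchi, app_assoc. reflexivity.
Qed.

Lemma reaches_split mu chi s0 n p mu' chi' m c :
  play G mu chi s0 n = p ->
  (forall k, mu s0 (p ++ k) = mu' (cur s0 p) k) ->
  (forall k, chi s0 (p ++ k) = chi' (cur s0 p) k) ->
  reaches G e s0 mu chi (n + m) c -> reaches G e (cur s0 p) mu' chi' m (c - hprice G s0 p).
Proof.
  intros Hp Hmu Hchi [[g [Hg Hc]] Hpre].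
  pose proof (play_split _ _ _ _ _ _ _ Hp Hmu Hchi) as PS.
  rewrite PS, cur_app in Hg, Hc. rewrite hprice_app in Hc.
  split.
  - exists g. split; [exact Hg|lra].
  - intros m' Hm'. destruct (Hpre (n + m')%nat ltac:(lia)) as [H1 H2].
    rewrite PS, cur_app in H1, H2. auto.
Qed.

Lemma reaches_join mu chi s0 n p mu' chi' m c :
  play G mu chi s0 n = p ->
  (forall k, mu s0 (p ++ k) = mu' (cur s0 p) k) ->
  (forall k, chi s0 (p ++ k) = chi' (cur s0 p) k) ->
  (forall m', (m' < n)%nat -> ggoal G (fst (cur s0 (play G mu chi s0 m'))) = None /\
     exists tr, avail G e (cur s0 (play G mu chi s0 m')) tr) ->
  reaches G e (cur s0 p) mu' chi' m c -> reaches G e s0 mu chi (n + m) (hprice G s0 p + c).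
Proof.
  intros Hp Hmu Hchi Hpre [[g [Hg Hc]] Hsub].
  pose proof (play_split _ _ _ _ _ _ _ Hp Hmu Hchi) as PS.
  split.
  - exists g. rewrite PS, cur_app, hprice_app. split; [exact Hg|lra].
  - intros m' Hm'. destruct (Nat.lt_ge_cases m' n) as [Hl|Hl]; [auto|].
    replace m' with (n + (m' - n))%nat by lia. rewrite PS, cur_app. apply Hsub. lia.
Qed.

Lemma reaches_pos mu chi s0 n c :
  reaches G e s0 mu chi n c -> ggoal G (fst s0) = None -> (0 < n)%nat.
Proof.
  intros [[g [Hg _]] _] Hn. destruct n; [|lia]. simpl in Hg. rewrite Hn in Hg. discriminate.
Qed.

(* A run reaching a goal after [N] steps visits no goal before, so its cost
   is determined by any goal visit at a step [n <= N]. *)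
Lemma reaches_at_goal s0 mu chi N c n g :
  reaches G e s0 mu chi N c -> (n <= N)%nat ->
  ggoal G (fst (cur s0 (play G mu chi s0 n))) = Some g ->
  N = n /\ c = g (snd (cur s0 (play G mu chi s0 n))) + hprice G s0 (play G mu chi s0 n).
Proof.
  intros [[g' [Hg' Hc]] Hpre] Hn Hg.
  assert (E : N = n).
  { destruct (Nat.lt_ge_cases n N) as [Hl|Hl]; [|lia].
    destruct (Hpre n Hl) as [Hng _]. rewrite Hg in Hng. discriminate. }
  subst N. split; [reflexivity|]. rewrite Hg in Hg'. inversion Hg'. subst g'. exact Hc.
Qed.

Lemma cost_le_mono s mu chi w w' :
  cost_le G e s mu chi w -> w <= w' -> cost_le G e s mu chi w'.
Proof. intros [n [c [H1 H2]]] H. exists n, c. split; auto. lra. Qed.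

End Runs.

Section Values.
Context {L : Type} (G : Game L) (e : R).

Lemma OptCost_spec b s :
  (exists v, isOptCost G b e s v) -> isOptCost G b e s (OptCost G b e s).
Proof. intros H. unfold OptCost. apply epsilon_spec. exact H. Qed.

(* The value does not depend on the lower end of the interval: [b] only
   constrains the initial time. *)
Lemma isOptCost_unique b b' s v v' : isOptCost G b e s v -> isOptCost G b' e s v' -> v = v'.
Proof.
  assert (Hnlt : forall b b' v v', isOptCost G b e s v -> isOptCost G b' e s v' -> ~ v < v').
  { intros b0 b0' v0 v0' [_ [H2 _]] [_ [_ H3]] Hlt.
    destruct (H2 ((v0' - v0) / 2) ltac:(lra)) as [mu [Hmu Hc]].
    destruct (H3 mu Hmu (v0 + (v0' - v0) / 2) ltac:(lra)) as [chi [Hchi Hn]].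
    apply Hn, Hc, Hchi. }
  intros H H'. pose proof (Hnlt _ _ _ _ H H'). pose proof (Hnlt _ _ _ _ H' H). lra.
Qed.

Lemma isOptCost_avail b s v :
  isOptCost G b e s v -> ggoal G (fst s) = None -> exists tr, avail G e s tr.
Proof.
  intros [_ [H2 _]] Hn. destruct (H2 1 ltac:(lra)) as [mu [_ Hc]].
  destruct (Hc (default_move G e) (default_move_valid G e false)) as [n [c [Hr _]]].
  pose proof (reaches_pos G e _ _ _ _ _ Hr Hn) as Hp.
  exact (proj2 (proj2 Hr O Hp)).
Qed.

Lemma min_first_move s s' c0 W :
  gmin G (fst s) = true -> ggoal G (fst s) = None -> avail G e s c0 -> step s c0 = s' ->
  (exists mu', valid_strat G e true mu' /\
     forall chi, valid_strat G e false chi -> cost_le G e s' mu' chi W) ->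
  exists mu, valid_strat G e true mu /\
     forall chi, valid_strat G e false chi -> cost_le G e s mu chi (tprice G s c0 + W).
Proof.
  intros Hmin Hng Hav Hstep [mu' [Hmu' Hc']].
  pose (Q := fun (s0 : L * R) (p : list (trans L)) => s0 = s /\ p = [c0]).
  pose (mu := switch_at (first_then G e s c0) Q (fun _ _ => mu')).
  exists mu. split; [apply switch_at_valid; auto; apply first_then_valid; auto|].
  intros chi Hchi.
  destruct (Hc' (resume chi s [c0]) (resume_valid G e false chi s [c0] Hchi))
    as [m [c [Hr Hc]]].
  assert (F : first_split (Q s) [] [c0] = Some ([c0], [])).
  { apply first_split_single; unfold Q; [intros [_ E]; discriminate|auto]. }
  assert (P1 : play G mu chi s 1 = [c0]).
  { simpl. rewrite Hmin. unfold mu. rewrite switch_at_before, first_then_at; [reflexivity|].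
    simpl. destruct (excluded_middle_informative (Q s [])) as [[_ E]|]; [discriminate|reflexivity]. }
  exists (1 + m)%nat, (hprice G s [c0] + c). split.
  - apply (reaches_join G e _ _ _ 1 [c0] mu' (resume chi s [c0])); auto.
    + intros k. unfold mu. rewrite switch_at_after; auto.
    + intros k. rewrite resume_at. reflexivity.
    + intros m' Hm'. replace m' with O by lia. simpl. split; [exact Hng|eauto].
    + simpl. rewrite Hstep. exact Hr.
  - simpl. lra.
Qed.

Lemma max_first_move b s s' mu c0 W w :
  valid_strat G e true mu -> ggoal G (fst s) = None -> avail G e s c0 ->
  (gmin G (fst s) = true -> mu s [] = c0) -> step s c0 = s' ->
  isOptCost G b e s' W -> w < tprice G s c0 + W ->
  exists chi, valid_strat G e false chi /\ ~ cost_le G e s mu chi w.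
Proof.
  intros Hmu Hng Hav Hfirst Hstep [_ [_ H3]] Hw.
  destruct (H3 (resume mu s [c0]) (resume_valid G e true mu s [c0] Hmu)
              (w - tprice G s c0) ltac:(lra)) as [chi' [Hchi' Hnc]].
  pose (Q := fun (s0 : L * R) (p : list (trans L)) => s0 = s /\ p = [c0]).
  pose (chi := switch_at (first_then G e s c0) Q (fun _ _ => chi')).
  exists chi. split; [apply switch_at_valid; auto; apply first_then_valid; auto|].
  intros [n [c [Hr Hc]]].
  assert (HQ0 : ~ Q s []) by (intros [_ E]; discriminate).
  assert (P1 : play G mu chi s 1 = [c0]).
  { simpl. destruct (gmin G (fst s)) eqn:E; [rewrite Hfirst; auto|].
    unfold chi. rewrite switch_at_before, first_then_at; [reflexivity|].
    simpl. destruct (excluded_middle_informative (Q s [])); [contradiction|reflexivity]. }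
  assert (F : first_split (Q s) [] [c0] = Some ([c0], [])).
  { apply first_split_single; unfold Q; auto. }
  pose proof (reaches_pos G e _ _ _ _ _ Hr Hng) as Hpos.
  destruct n as [|m]; [lia|]. change (S m) with (1 + m)%nat in Hr.
  apply (reaches_split G e _ _ _ 1 [c0] (resume mu s [c0]) chi') in Hr; auto.
  - apply Hnc. exists m, (c - hprice G s [c0]). simpl in Hr |- *. rewrite Hstep in Hr.
    split; [exact Hr|lra].
  - intros k. rewrite resume_at. reflexivity.
  - intros k. unfold chi. rewrite switch_at_after; auto.
Qed.

(* Waiting in a Min location is an option of Min: the value at time [y] is at
   most the price of waiting until [z] plus the value at [z]. *)
Lemma min_delay_ineq b b' l1 y z Vy Wz :
  gmin G l1 = true -> ggoal G l1 = None -> gurg G l1 = false -> y < z -> z <= e ->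
  isOptCost G b e (l1, y) Vy -> isOptCost G b' e (l1, z) Wz ->
  Vy <= INR (gprice G l1) * (z - y) + Wz.
Proof.
  intros Hm Hg Hu Hyz Hze HV HW. apply Rnot_lt_le. intros Hlt.
  set (d := Vy - (INR (gprice G l1) * (z - y) + Wz)).
  destruct HW as [_ [H2 _]]. destruct (H2 (d / 2) ltac:(unfold d; lra)) as [mu' [Hmu' Hc']].
  destruct (min_first_move (l1, y) (l1, z) (Delay (z - y)) (Wz + d / 2)) as [mu [Hmu Hc]];
    auto; [simpl; repeat split; auto; lra|simpl; f_equal; ring|eauto|].
  destruct HV as [_ [_ H3]].
  destruct (H3 mu Hmu (tprice G (l1, y) (Delay (z - y)) + (Wz + d / 2))) as [chi [Hchi Hn]].
  - simpl. unfold d in *. lra.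
  - apply Hn, Hc, Hchi.
Qed.

Lemma max_delay_ineq b b' l1 y z Vy Wz :
  gmin G l1 = false -> ggoal G l1 = None -> gurg G l1 = false -> y < z -> z <= e ->
  isOptCost G b e (l1, y) Vy -> isOptCost G b' e (l1, z) Wz ->
  INR (gprice G l1) * (z - y) + Wz <= Vy.
Proof.
  intros Hm Hg Hu Hyz Hze HV HW. apply Rnot_lt_le. intros Hlt.
  set (d := INR (gprice G l1) * (z - y) + Wz - Vy).
  destruct HV as [HV1 [H2 H3]]. destruct (H2 (d / 2) ltac:(unfold d; lra)) as [mu [Hmu Hc]].
  destruct (max_first_move b' (l1, y) (l1, z) mu (Delay (z - y)) Wz (Vy + d / 2))
    as [chi [Hchi Hn]]; [exact Hmu|exact Hg| | |simpl; f_equal; ring|exact HW| |].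
  - simpl. repeat split; auto; lra.
  - simpl. intros E. rewrite Hm in E. discriminate.
  - simpl. unfold d in *. lra.
  - apply Hn, Hc, Hchi.
Qed.

End Values.

(** ** Translating between [G] and the CostConsistent game *)

Section Translation.
Context {L : Type} (G : Game L) (r e2 : R) (Hre : r <= e2).

Let CC := CostConsistent G r e2.

Definition emb_trans (tr : trans L) : trans (CCLoc G) :=
  match tr with Disc l => Disc (inl l) | Delay t => Delay t end.
Definition emb_state (s : L * R) : CCLoc G * R := (inl (fst s), snd s).

Lemma step_emb s tr : step (emb_state s) (emb_trans tr) = emb_state (step s tr).
Proof. destruct tr; reflexivity. Qed.

Lemma cur_emb s h : cur (emb_state s) (map emb_trans h) = emb_state (cur s h).
Proof.
  revert s; induction h as [|a h IH]; intros s; [reflexivity|].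
  simpl. unfold cur in *. simpl. rewrite step_emb. apply IH.
Qed.

Lemma hprice_emb s h : hprice CC (emb_state s) (map emb_trans h) = hprice G s h.
Proof.
  revert s; induction h as [|a h IH]; intros s; [reflexivity|].
  simpl. rewrite step_emb, IH. destruct a; reflexivity.
Qed.

Fixpoint unemb_hist (k : list (trans (CCLoc G))) : option (list (trans L)) :=
  match k with
  | [] => Some []
  | Disc (inl l) :: k' => option_map (cons (Disc l)) (unemb_hist k')
  | Disc (inr _) :: _ => None
  | Delay t :: k' => option_map (cons (Delay t)) (unemb_hist k')
  end.

Lemma unemb_hist_map h : unemb_hist (map emb_trans h) = Some h.
Proof. induction h as [|[l|t] h IH]; simpl; try rewrite IH; reflexivity. Qed.

Lemma unemb_hist_some k h : unemb_hist k = Some h -> k = map emb_trans h.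
Proof.
  revert h; induction k as [|[[l|b]|t] k IH]; intros h E; simpl in E; try discriminate.
  - inversion E; reflexivity.
  - destruct (unemb_hist k) eqn:U; simpl in E; inversion E; subst. simpl. f_equal. auto.
  - destruct (unemb_hist k) eqn:U; simpl in E; inversion E; subst. simpl. f_equal. auto.
Qed.

Lemma unemb_hist_none k x : unemb_hist k = None -> unemb_hist (k ++ x) = None.
Proof.
  induction k as [|[[l|b]|t] k IH]; intros E; simpl in *; try discriminate; try reflexivity;
    destruct (unemb_hist k); try discriminate; rewrite IH; reflexivity.
Qed.

Lemma nonurgent_prop l : nonurgentb G l = true -> ggoal G l = None /\ gurg G l = false.
Proof.
  unfold nonurgentb. destruct (ggoal G l); [discriminate|].
  destruct (gurg G l); simpl; auto.
Qed.

Lemma nonurgent_of l : ggoal G l = None -> gurg G l = false -> nonurgentb G l = true.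
Proof. unfold nonurgentb. intros -> ->. reflexivity. Qed.

Definition exit_move (l : L) : trans (CCLoc G) :=
  match excluded_middle_informative (nonurgentb G l = true) with
  | left H => Disc (inr (exist _ l H))
  | right _ => Delay 0
  end.

Lemma exit_move_spec l : nonurgentb G l = true ->
  exists b, exit_move l = Disc (inr b) /\ proj1_sig b = l.
Proof.
  intros H. unfold exit_move.
  destruct (excluded_middle_informative _) as [H'|H']; [|contradiction].
  eexists; split; reflexivity.
Qed.

(* Every non-goal state of [G] with an available move has an available move
   in [CC] (a delay there can be replaced by the exit). *)
Lemma avail_in_CC e s tr : avail G e s tr -> ggoal G (fst s) = None ->
  exists trC, avail CC r (emb_state s) trC.
Proof.
  intros Ha Hg. destruct tr as [l'|t].
  - exists (Disc (inl l')). exact Ha.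
  - destruct Ha as [_ [Hu _]].
    exists (Disc (inr (exist _ (fst s) (nonurgent_of _ Hg Hu)))). reflexivity.
Qed.

(** Lifting a strategy of [G_{[., e2]}] to [CC_{[., r]}]: a delay crossing [r]
    becomes the exit of the current location. *)

Definition lift_move (s : L * R) (c : trans L) : trans (CCLoc G) :=
  match c with
  | Disc l => Disc (inl l)
  | Delay t => if Rle_dec (snd s + t) r then Delay t else exit_move (fst s)
  end.

Definition lift_raw (sg : strat L) : strat (CCLoc G) := fun sC hC =>
  match fst sC, unemb_hist hC with
  | inl l0, Some h => lift_move (cur (l0, snd sC) h) (sg (l0, snd sC) h)
  | _, _ => default_move CC r sC hC
  end.

Definition lift_strat (sg : strat L) : strat (CCLoc G) := repair CC r (lift_raw sg).

Lemma lift_strat_at sg s h : avail CC r (emb_state (cur s h)) (lift_move (cur s h) (sg s h)) ->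
  lift_strat sg (emb_state s) (map emb_trans h) = lift_move (cur s h) (sg s h).
Proof.
  intros Ha. unfold lift_strat, repair, lift_raw. simpl. rewrite unemb_hist_map.
  destruct s as [l0 x0]. simpl. rewrite cur_emb.
  destruct (excluded_middle_informative _) as [_|n]; [reflexivity|contradiction].
Qed.

Lemma lift_strat_step sg s h :
  avail G e2 (cur s h) (sg s h) -> ggoal G (fst (cur s h)) = None -> snd (cur s h) <= r ->
  (lift_strat sg (emb_state s) (map emb_trans h) = emb_trans (sg s h) /\
   snd (cur s h) <= snd (step (cur s h) (sg s h)) <= r) \/
  (exists t b, sg s h = Delay t /\ r < snd (cur s h) + t /\ 0 < t /\
     proj1_sig b = fst (cur s h) /\ lift_strat sg (emb_state s) (map emb_trans h) = Disc (inr b)).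
Proof.
  intros Hav Hng Hr. rewrite lift_strat_at.
  - destruct (sg s h) as [l'|t] eqn:E; simpl; [left; split; [reflexivity|lra]|].
    destruct Hav as [Ht [Hu _]]. destruct (Rle_dec (snd (cur s h) + t) r) as [Hle|Hgt].
    + left. split; [reflexivity|lra].
    + right. destruct (exit_move_spec _ (nonurgent_of _ Hng Hu)) as [b [Eb Hb]].
      exists t, b. repeat split; auto; lra.
  - destruct (sg s h) as [l'|t] eqn:E; simpl; [exact Hav|].
    destruct Hav as [Ht [Hu He]]. destruct (Rle_dec (snd (cur s h) + t) r) as [Hle|Hgt].
    + simpl. repeat split; auto.
    + destruct (exit_move_spec _ (nonurgent_of _ Hng Hu)) as [b [-> Hb]]. exact Hb.
Qed.

(* An available delay proposed by the lifted strategy is a delay of [sg]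
   that is available in [G] too (here [r <= e2] is needed). *)
Lemma lift_raw_delay sg s h :
  avail_delay CC r (emb_state (cur s h)) (lift_raw sg (emb_state s) (map emb_trans h)) ->
  lift_raw sg (emb_state s) (map emb_trans h) = emb_trans (sg s h) /\
  avail_delay G e2 (cur s h) (sg s h).
Proof.
  unfold lift_raw. simpl. rewrite unemb_hist_map. destruct s as [l0 x0]. simpl.
  intros [Hd Ha].
  destruct (sg (l0, x0) h) as [l'|t]; simpl in Hd, Ha |- *; [contradiction|].
  destruct (Rle_dec (snd (cur (l0, x0) h) + t) r) as [Hle|Hgt].
  - destruct Ha as [A1 [A2 A3]]. repeat split; auto; lra.
  - unfold exit_move in Hd, Ha. destruct (excluded_middle_informative _); simpl in Hd, Ha;
      [contradiction|lra].
Qed.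

Lemma lift_strat_valid pl sg : valid_strat G e2 pl sg -> valid_strat CC r pl (lift_strat sg).
Proof.
  intros Hv. apply valid_intro; [intros; apply repair_avail; auto|].
  assert (Dflt : forall sC hC, (forall k, lift_raw sg sC (hC ++ k) = default_move CC r sC (hC ++ k)) ->
            delays_end CC r (lift_strat sg) sC hC).
  { intros sC hC E. apply (delays_end_agree CC r _ (default_move CC r));
      [|apply default_move_delays_end].
    intros k. apply repair_default, E. }
  intros [[l0|b0] x0] hC Hp; [|apply Dflt; reflexivity].
  destruct (unemb_hist hC) as [h|] eqn:U;
    [|apply Dflt; intros k; unfold lift_raw; simpl; rewrite unemb_hist_none; auto].
  apply unemb_hist_some in U. subst hC. change (inl l0, x0) with (emb_state (l0, x0)) in *.
  refine (delays_end_transfer CC r (lift_strat sg) G e2 sg (emb_state (l0, x0)) (l0, x0)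
            (fun hC' k => hC' = map emb_trans k) _ (map emb_trans h) h eq_refl _).
  - intros hC' k -> Ha. unfold lift_strat in Ha |- *.
    destruct (repair_cases CC r (lift_raw sg) (emb_state (l0, x0)) (map emb_trans k))
      as [[E _]|E]; rewrite E in Ha |- *; [|right; apply default_move_then_end, Ha].
    rewrite cur_emb in Ha. destruct (lift_raw_delay sg (l0, x0) k Ha) as [E1 Hd].
    left. rewrite E1, map_app. split; [exact Hd|reflexivity].
  - apply (valid_delays_end G e2 pl); auto. rewrite <- Hp, cur_emb. reflexivity.
Qed.

(** Lowering a strategy of [CC_{[., r]}] to [G_{[., e2]}]; exits are never
    followed by the simulation, so their translation is irrelevant. *)

Definition lower_move (c : trans (CCLoc G)) : trans L :=
  match c with Disc (inl l) => Disc l | Disc (inr _) => Delay 0 | Delay t => Delay t end.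

Definition lower_raw (sg : strat (CCLoc G)) : strat L := fun s h =>
  if excluded_middle_informative
       (avail CC r (emb_state (cur s h)) (sg (emb_state s) (map emb_trans h)))
  then lower_move (sg (emb_state s) (map emb_trans h)) else default_move G e2 s h.

Definition lower_strat (sg : strat (CCLoc G)) : strat L := repair G e2 (lower_raw sg).

Lemma lower_strat_valid pl sg : valid_strat CC r pl sg -> valid_strat G e2 pl (lower_strat sg).
Proof.
  intros Hv. apply valid_intro; [intros; apply repair_avail; auto|].
  intros s h Hp.
  refine (delays_end_transfer G e2 (lower_strat sg) CC r sg s (emb_state s)
            (fun h' k => k = map emb_trans h') _ h (map emb_trans h) eq_refl _).
  - intros h' k -> Ha. unfold lower_strat in Ha |- *.
    destruct (repair_cases G e2 (lower_raw sg) s h') as [[E _]|E]; rewrite E in Ha |- *;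
      [|right; apply default_move_then_end, Ha].
    unfold lower_raw in Ha |- *.
    destruct (excluded_middle_informative _) as [Hc|Hc];
      [|right; apply default_move_then_end, Ha].
    destruct (sg (emb_state s) (map emb_trans h')) as [[l'|b]|t]; simpl in Ha.
    + destruct Ha as [[] _].
    + destruct Ha as [_ [A _]]. lra.
    + left. rewrite cur_emb, map_app. split; [split; [exact I|exact Hc]|reflexivity].
  - apply (valid_delays_end CC r pl); auto. rewrite cur_emb. exact Hp.
Qed.

Lemma lower_strat_step sg s h :
  avail CC r (emb_state (cur s h)) (sg (emb_state s) (map emb_trans h)) -> snd (cur s h) <= r ->
  (exists b, sg (emb_state s) (map emb_trans h) = Disc (inr b) /\ proj1_sig b = fst (cur s h)) \/
  (lower_strat sg s h = lower_move (sg (emb_state s) (map emb_trans h)) /\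
   emb_trans (lower_move (sg (emb_state s) (map emb_trans h))) = sg (emb_state s) (map emb_trans h) /\
   snd (cur s h) <= snd (step (cur s h) (lower_move (sg (emb_state s) (map emb_trans h)))) <= r).
Proof.
  intros Hc Hr.
  assert (Hlow : lower_raw sg s h = lower_move (sg (emb_state s) (map emb_trans h))).
  { unfold lower_raw. destruct (excluded_middle_informative _); [reflexivity|contradiction]. }
  destruct (sg (emb_state s) (map emb_trans h)) as [[l'|b]|t] eqn:Es; simpl in Hc.
  - right. unfold lower_strat, repair. rewrite Hlow. simpl.
    destruct (excluded_middle_informative _) as [_|n]; [|contradiction].
    repeat split; lra.
  - left. exists b. auto.
  - right. destruct Hc as [A1 [A2 A3]]. unfold lower_strat, repair. rewrite Hlow. simpl.
    destruct (excluded_middle_informative _) as [_|n]; [repeat split; lra|].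
    exfalso. apply n. simpl. repeat split; auto; lra.
Qed.

End Translation.

Arguments emb_trans {L G} tr.
Arguments emb_state {L G} s.

Section Bounds.
Context {L : Type} (G : Game L) (b1 r e2 : R)
  (HG : forall b e, 0 <= b -> b <= e -> e <= 1 ->
     forall (l : L) (x : R), b <= x <= e -> exists v, isOptCost G b e (l, x) v)
  (Hb1 : 0 <= b1) (Hb1r : b1 <= r) (Hre : r <= e2) (He2 : e2 <= 1).

Let CC := CostConsistent G r e2.

Lemma value_I2 l z : r <= z <= e2 -> isOptCost G r e2 (l, z) (OptCost G r e2 (l, z)).
Proof. intros Hz. apply OptCost_spec, HG; lra. Qed.

Lemma avail_in_G st : 0 <= snd st <= e2 -> ggoal G (fst st) = None -> exists tr, avail G e2 st tr.
Proof.
  intros Hy Hg. destruct st as [l1 y]. simpl in *.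
  destruct (HG y e2 ltac:(lra) ltac:(lra) He2 l1 y ltac:(lra)) as [v Hv].
  eapply isOptCost_avail; eauto.
Qed.

Definition exit_cost (st : L * R) : R :=
  OptCost G r e2 (fst st, r) + (r - snd st) * INR (gprice G (fst st)).

(* Leaving [I1] from a non-urgent location at time [y <= r] by a delay [t]
   to [y + t > r]: Min, at its own location, can do at least as well by
   exiting; Max, at its own location, does at most as well as by exiting. *)
Lemma exit_cost_le_cross st t :
  gmin G (fst st) = true -> ggoal G (fst st) = None -> gurg G (fst st) = false ->
  snd st <= r < snd st + t -> snd st + t <= e2 ->
  exit_cost st <= INR (gprice G (fst st)) * t + OptCost G r e2 (fst st, snd st + t).
Proof.
  intros Hm Hg Hu Hy Hyt. unfold exit_cost.
  assert (OptCost G r e2 (fst st, r) <=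
          INR (gprice G (fst st)) * (snd st + t - r) + OptCost G r e2 (fst st, snd st + t))
    by (apply (min_delay_ineq G e2 r r (fst st) r (snd st + t)); auto; try lra;
        apply value_I2; lra).
  assert (INR (gprice G (fst st)) * (snd st + t - r) + (r - snd st) * INR (gprice G (fst st))
          = INR (gprice G (fst st)) * t) by ring.
  lra.
Qed.

Lemma exit_cost_ge_cross st t :
  gmin G (fst st) = false -> ggoal G (fst st) = None -> gurg G (fst st) = false ->
  snd st <= r < snd st + t -> snd st + t <= e2 ->
  INR (gprice G (fst st)) * t + OptCost G r e2 (fst st, snd st + t) <= exit_cost st.
Proof.
  intros Hm Hg Hu Hy Hyt. unfold exit_cost.
  assert (INR (gprice G (fst st)) * (snd st + t - r) + OptCost G r e2 (fst st, snd st + t)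
          <= OptCost G r e2 (fst st, r))
    by (apply (max_delay_ineq G e2 r r (fst st) r (snd st + t)); auto; try lra;
        apply value_I2; lra).
  assert (INR (gprice G (fst st)) * (snd st + t - r) + (r - snd st) * INR (gprice G (fst st))
          = INR (gprice G (fst st)) * t) by ring.
  lra.
Qed.

Lemma min_wait_until_r st eps :
  gmin G (fst st) = true -> ggoal G (fst st) = None -> gurg G (fst st) = false ->
  snd st <= r -> 0 < eps ->
  exists mu, valid_strat G e2 true mu /\
    forall chi, valid_strat G e2 false chi -> cost_le G e2 st mu chi (exit_cost st + eps).
Proof.
  intros Hm Hg Hu Hy Heps. unfold exit_cost.
  destruct (value_I2 (fst st) r ltac:(lra)) as [_ [Hopt _]].
  destruct (Rle_lt_or_eq_dec (snd st) r Hy) as [Hlt|Heq].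
  - destruct (min_first_move G e2 st (fst st, r) (Delay (r - snd st))
                (OptCost G r e2 (fst st, r) + eps)) as [mu [Hmu Hc]]; auto.
    + simpl. repeat split; auto; lra.
    + unfold step. f_equal. ring.
    + exists mu. split; [exact Hmu|]. intros chi Hchi.
      eapply cost_le_mono; [apply Hc, Hchi|]. simpl. lra.
  - destruct st as [l1 y]. simpl in *. subst y.
    destruct (Hopt eps Heps) as [mu [Hmu Hc]]. exists mu. split; [exact Hmu|].
    intros chi Hchi. eapply cost_le_mono; [apply Hc, Hchi|]. lra.
Qed.

Lemma max_wait_until_r st mu w :
  gmin G (fst st) = false -> ggoal G (fst st) = None -> gurg G (fst st) = false ->
  snd st <= r -> valid_strat G e2 true mu -> w < exit_cost st ->
  exists chi, valid_strat G e2 false chi /\ ~ cost_le G e2 st mu chi w.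
Proof.
  intros Hm Hg Hu Hy Hmu Hw. unfold exit_cost in Hw.
  destruct (Rle_lt_or_eq_dec (snd st) r Hy) as [Hlt|Heq].
  - apply (max_first_move G e2 r st (fst st, r) mu (Delay (r - snd st))
             (OptCost G r e2 (fst st, r))); auto.
    + simpl. repeat split; auto; lra.
    + rewrite Hm. discriminate.
    + unfold step. f_equal. ring.
    + apply value_I2. lra.
    + simpl. lra.
  - destruct st as [l1 y]. simpl in *. subst y.
    destruct (value_I2 l1 r ltac:(lra)) as [_ [_ Hopt]]. apply Hopt; auto. lra.
Qed.

Section Sync.
Context (s : L * R) (Q : list (trans L) -> Prop) (mu chi : strat L)
  (muC chiC : strat (CCLoc G)).

Local Notation hg n := (play G mu chi s n).
Local Notation hc n := (play CC muC chiC (emb_state s) n).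

Definition synced (n : nat) : Prop :=
  (forall m, (m <= n)%nat -> hc m = map emb_trans (hg m) /\ 0 <= snd (cur s (hg m)) <= r) /\
  (forall m, (m < n)%nat -> first_split Q [] (hg m) = None).

Lemma synced_0 : 0 <= snd s <= r -> synced 0.
Proof.
  intros Hs. split; [|intros m Hm; lia].
  intros m Hm. replace m with O by lia. simpl. auto.
Qed.

Lemma synced_S n c : synced n -> first_split Q [] (hg n) = None ->
  hg (S n) = hg n ++ [c] -> hc (S n) = hc n ++ [emb_trans c] ->
  0 <= snd (step (cur s (hg n)) c) <= r -> synced (S n).
Proof.
  intros [I1 I2] HF Eg Ec Ht. split.
  - intros m Hm. destruct (Nat.le_gt_cases m n) as [Hmn|Hmn]; [apply I1; auto|].
    replace m with (S n) by lia. rewrite Ec, Eg, map_app, cur_snoc, (proj1 (I1 n (le_n n))).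
    auto.
  - intros m Hm. destruct (Nat.lt_ge_cases m n) as [Hmn|Hmn]; [apply I2; auto|].
    replace m with n by lia. exact HF.
Qed.

Lemma synced_until N (P : Prop) : synced 0 ->
  (forall n, (n < N)%nat -> synced n -> synced (S n) \/ P) -> synced N \/ P.
Proof.
  intros H0 Hstep. induction N as [|N IH]; [auto|].
  destruct IH as [HI|HP]; [intros n Hn; apply Hstep; lia| |auto].
  apply Hstep; auto.
Qed.

Lemma synced_cur n : synced n ->
  cur (emb_state s) (hc n) = emb_state (cur s (hg n)) /\
  hprice CC (emb_state s) (hc n) = hprice G s (hg n).
Proof.
  intros [I1 _]. rewrite (proj1 (I1 n (le_n n))). split; [apply cur_emb|apply hprice_emb].
Qed.

Lemma synced_next n : synced n ->
  hc (S n) = hc n ++ [if gmin G (fst (cur s (hg n)))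
                      then muC (emb_state s) (map emb_trans (hg n))
                      else chiC (emb_state s) (map emb_trans (hg n))].
Proof.
  intros HI. rewrite play_S, (proj1 (synced_cur n HI)).
  rewrite (proj1 (proj1 HI n (le_n n))). reflexivity.
Qed.

Lemma synced_facts_CC n m : synced n -> (m <= n)%nat ->
  (ggoal G (fst (cur s (hg m))) = None /\ exists tr, avail G e2 (cur s (hg m)) tr) ->
  ggoal CC (fst (cur (emb_state s) (hc m))) = None /\
  exists tr, avail CC r (cur (emb_state s) (hc m)) tr.
Proof.
  intros [I1 _] Hm [Hg [tr Ha]]. rewrite (proj1 (I1 m Hm)), cur_emb.
  split; [exact Hg|]. eapply avail_in_CC; eauto.
Qed.

Lemma synced_facts_G n m : synced n -> (m <= n)%nat ->
  (ggoal CC (fst (cur (emb_state s) (hc m))) = None /\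
   exists tr, avail CC r (cur (emb_state s) (hc m)) tr) ->
  ggoal G (fst (cur s (hg m))) = None /\ exists tr, avail G e2 (cur s (hg m)) tr.
Proof.
  intros [I1 _] Hm [Hg _]. destruct (I1 m Hm) as [E Ht]. rewrite E, cur_emb in Hg.
  split; [exact Hg|]. apply avail_in_G; auto; lra.
Qed.

Lemma synced_reaches_CC N c : synced N ->
  reaches G e2 s mu chi N c -> reaches CC r (emb_state s) muC chiC N c.
Proof.
  intros HI [[g [Hg Hc]] Hpre]. destruct (synced_cur N HI) as [E1 E2]. split.
  - exists g. rewrite E1, E2. split; assumption.
  - intros m Hm. apply (synced_facts_CC N m); auto; lia.
Qed.

Lemma synced_reaches_G N c : synced N ->
  reaches CC r (emb_state s) muC chiC N c -> reaches G e2 s mu chi N c.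
Proof.
  intros HI [[g [Hg Hc]] Hpre]. destruct (synced_cur N HI) as [E1 E2]. split.
  - exists g. rewrite E1, E2 in *. split; assumption.
  - intros m Hm. apply (synced_facts_G N m); auto; lia.
Qed.

Lemma synced_exit n b : synced n ->
  hc (S n) = hc n ++ [Disc (inr b)] -> proj1_sig b = fst (cur s (hg n)) ->
  exists g, ggoal CC (fst (cur (emb_state s) (hc (S n)))) = Some g /\
    g (snd (cur (emb_state s) (hc (S n)))) + hprice CC (emb_state s) (hc (S n)) =
    exit_cost (cur s (hg n)) + hprice G s (hg n).
Proof.
  intros HI HS Hb. destruct (synced_cur n HI) as [E1 E2].
  rewrite HS, hprice_app, E2, cur_snoc, E1. eexists. split; [reflexivity|].
  unfold exit_cost. simpl. rewrite Hb. ring.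
Qed.

End Sync.

(** *** Upper bound: Min's eps-optimal strategy of [G_{I1 u I2}], lifted *)

Section UpperBound.
Context (l : L) (x : R) (Hx : b1 <= x <= r) (eps : R) (Heps : 0 < eps)
  (muG : strat L) (HmuG : valid_strat G e2 true muG)
  (chiC : strat (CCLoc G)) (HchiC : valid_strat CC r false chiC).

Definition breakA (s0 : L * R) (p : list (trans L)) : Prop :=
  (gmin G (fst (cur s0 p)) = true /\
     exists t, muG s0 p = Delay t /\ r < snd (cur s0 p) + t) \/
  (gmin G (fst (cur s0 p)) = false /\
     exists b, chiC (emb_state s0) (map emb_trans p) = Disc (inr b)).

Definition counterA (s0 : L * R) (p : list (trans L)) : strat L :=
  pick_counter G e2 (cur s0 p) (resume muG s0 p) (exit_cost (cur s0 p) - eps / 2).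

Definition chiA : strat L := switch_at (lower_strat G r e2 chiC) breakA counterA.

Lemma chiA_valid : valid_strat G e2 false chiA.
Proof.
  apply switch_at_valid; [apply lower_strat_valid; auto|]. intros. apply pick_counter_spec.
Qed.

Local Notation sA := (l, x).
Local Notation muA := (lift_strat G r e2 muG).
Local Notation hG n := (play G muG chiA sA n).
Local Notation hC n := (play CC muA chiC (emb_state sA) n).
Local Notation syncA := (synced sA (breakA sA) muG chiA muA chiC).

Section WithRun.
Context (N : nat) (c : R) (Hr : reaches G e2 sA muG chiA N c)
  (Hc : c <= OptCost G b1 e2 sA + eps / 2).

Local Notation goalA := (cost_le CC r (emb_state sA) muA chiC (OptCost G b1 e2 sA + eps)).

Lemma runA_facts m : (m < N)%nat ->
  ggoal G (fst (cur sA (hG m))) = None /\ exists tr, avail G e2 (cur sA (hG m)) tr.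
Proof. intros Hm. exact (proj2 Hr m Hm). Qed.

(* A break at step [n] followed by an exit in [CC]: Max's counter-strategy
   shows that the cost [c] of the [G] run exceeds the exit cost, up to eps/2. *)
Lemma breakA_exit n b : (n < N)%nat -> syncA n ->
  first_split (breakA sA) [] (hG n) = Some (hG n, []) ->
  hC (S n) = hC n ++ [Disc (inr b)] -> proj1_sig b = fst (cur sA (hG n)) ->
  (exists chi, valid_strat G e2 false chi /\
     ~ cost_le G e2 (cur sA (hG n)) (resume muG sA (hG n)) chi (exit_cost (cur sA (hG n)) - eps / 2)) ->
  goalA.
Proof.
  intros HnN HI HF HS Hb Hex.
  set (h := hG n) in *. set (st := cur sA h) in *.
  assert (Hnc := proj2 (pick_counter_spec G e2 st (resume muG sA h) (exit_cost st - eps / 2)) Hex).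
  assert (Hsub : reaches G e2 st (resume muG sA h) (counterA sA h) (N - n) (c - hprice G sA h)).
  { apply (reaches_split G e2 muG chiA sA n h); auto.
    - intros k. rewrite resume_at. reflexivity.
    - intros k. unfold chiA. rewrite switch_at_after; auto.
    - replace (n + (N - n))%nat with N by lia. exact Hr. }
  assert (Hlt : exit_cost st - eps / 2 < c - hprice G sA h).
  { apply Rnot_le_lt. intros Hle. apply Hnc. exists (N - n)%nat, (c - hprice G sA h). auto. }
  destruct (synced_exit sA (breakA sA) muG chiA muA chiC n b HI HS Hb) as [g [Hg Hcost]].
  exists (S n), (exit_cost st + hprice G sA h). split; [split|lra].
  - exists g. split; [exact Hg|]. fold h st in Hcost. lra.
  - intros m Hm. apply (synced_facts_CC _ _ _ _ _ _ n m HI); [lia|apply runA_facts; lia].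
Qed.

(* The simulation breaks at step [n]: in both cases the state is non-urgent
   and the [CC] play exits. *)
Lemma breakA_now n : (n < N)%nat -> syncA n ->
  first_split (breakA sA) [] (hG n) = Some (hG n, []) -> breakA sA (hG n) -> goalA.
Proof.
  intros HnN HI HF HQ. destruct (runA_facts n HnN) as [Hng Hav].
  destruct (proj1 HI n (le_n n)) as [EC Ht].
  pose proof (synced_next _ _ _ _ _ _ n HI) as HS.
  set (h := hG n) in *. set (st := cur sA h) in *.
  destruct HQ as [[Hmin [t [Et Hrt]]]|[Hmax [b Eb]]]; [fold st in Hmin; fold st in Hrt|fold st in Hmax].
  - assert (Hat : avail G e2 st (Delay t)) by (rewrite <- Et; apply (proj1 HmuG); auto).
    destruct (lift_strat_step G r e2 muG sA h) as [[_ Hle]|[t' [b [Et' [_ [_ [Hb Hl]]]]]]];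
      try (rewrite Et; exact Hat); [exact Hng|exact (proj2 Ht)| |].
    { rewrite Et in Hle. simpl in Hle. fold st in Hle. lra. }
    rewrite Et in Et'. injection Et' as <-.
    destruct Hat as [Ht0 [Hu Hte]].
    apply (breakA_exit n b); auto; [rewrite HS, Hmin, Hl; reflexivity|].
    apply (max_first_move G e2 r st (fst st, snd st + t) _ (Delay t)
             (OptCost G r e2 (fst st, snd st + t))).
    + apply resume_valid, HmuG.
    + exact Hng.
    + repeat split; auto.
    + intros _. unfold st. rewrite resume_at, app_nil_r. exact Et.
    + reflexivity.
    + apply value_I2. lra.
    + pose proof (exit_cost_le_cross st t Hmin Hng Hu ltac:(lra) Hte). fold h st. simpl. lra.
  - assert (Hab : avail CC r (emb_state st) (Disc (inr b))).
    { rewrite <- Eb. pose proof (proj1 HchiC (emb_state sA) (map emb_trans h)) as X.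
      rewrite cur_emb in X. apply X; [exact Hmax|]. destruct Hav as [tr Htr].
      eapply avail_in_CC; eauto. }
    simpl in Hab. destruct (nonurgent_prop G _ (proj2_sig b)) as [_ Hu]. rewrite Hab in Hu.
    apply (breakA_exit n b); auto; [rewrite HS, Hmax, Eb; reflexivity|].
    fold h st. apply max_wait_until_r; auto; [lra|apply resume_valid, HmuG|lra].
Qed.

Lemma syncA_step n : (n < N)%nat -> syncA n ->
  first_split (breakA sA) [] (hG n) = None -> syncA (S n).
Proof.
  intros HnN HI HF. destruct (runA_facts n HnN) as [Hng Hav].
  destruct (proj1 HI n (le_n n)) as [EC Ht].
  pose proof (first_split_none _ _ _ HF) as HnQ. simpl in HnQ.
  pose proof (synced_next _ _ _ _ _ _ n HI) as HS.
  set (h := hG n) in *.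
  destruct (gmin G (fst (cur sA h))) eqn:Eo.
  - assert (Hc0 : avail G e2 (cur sA h) (muG sA h)) by (apply (proj1 HmuG); auto).
    destruct (lift_strat_step G r e2 muG sA h Hc0 Hng ltac:(lra))
      as [[Hl Htime]|[t [b [Et [Hcross _]]]]].
    + apply (synced_S _ _ _ _ _ _ n (muG sA h)); auto; [|rewrite HS, Hl; reflexivity|fold h; lra].
      rewrite play_S. fold h. rewrite Eo. reflexivity.
    + exfalso. apply HnQ. left. eauto.
  - assert (Hcc : avail CC r (emb_state (cur sA h)) (chiC (emb_state sA) (map emb_trans h))).
    { pose proof (proj1 HchiC (emb_state sA) (map emb_trans h)) as X. rewrite cur_emb in X.
      apply X; [exact Eo|]. destruct Hav as [tr Htr]. eapply avail_in_CC; eauto. }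
    destruct (lower_strat_step G r e2 Hre chiC sA h Hcc ltac:(lra))
      as [[b [Eb _]]|[Hlow [Hemb Htime]]]; [exfalso; apply HnQ; right; eauto|].
    apply (synced_S _ _ _ _ _ _ n (lower_move G (chiC (emb_state sA) (map emb_trans h))));
      auto; [|rewrite HS, Hemb; reflexivity|fold h; lra].
    rewrite play_S. fold h. rewrite Eo. unfold chiA. rewrite switch_at_before by exact HF.
    rewrite Hlow. reflexivity.
Qed.

(* By induction along the run, either the plays stay synchronised up to the
   goal visit of the [G] run, whose cost [c] then bounds the [CC] run, or the
   simulation breaks and [breakA_now] applies. *)
Lemma upper_run : goalA.
Proof.
  destruct (synced_until sA (breakA sA) muG chiA muA chiC N goalA) as [HN|Hgood]; auto.
  - apply synced_0. simpl. lra.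
  - intros n HnN HI.
    destruct (first_split_growing (breakA sA) (fun m => hG m) n eq_refl) as [HF|[HF HQ]].
    + intros m. eexists. apply play_S.
    + apply (proj2 HI).
    + left. apply syncA_step; auto.
    + right. apply (breakA_now n); auto.
  - exists N, c. split; [apply (synced_reaches_CC _ _ _ _ _ _ N c HN Hr)|lra].
Qed.

End WithRun.

End UpperBound.

Lemma upper_bound l x eps : b1 <= x <= r -> 0 < eps ->
  exists muC, valid_strat CC r true muC /\
    forall chiC, valid_strat CC r false chiC ->
      cost_le CC r (inl l, x) muC chiC (OptCost G b1 e2 (l, x) + eps).
Proof.
  intros Hx Heps.
  destruct (OptCost_spec G e2 b1 (l, x) ltac:(apply HG; lra)) as [_ [Hopt _]].
  destruct (Hopt (eps / 2) ltac:(lra)) as [muG [HmuG Hg]].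
  exists (lift_strat G r e2 muG). split; [apply lift_strat_valid; auto|].
  intros chiC HchiC.
  destruct (Hg (chiA eps muG chiC) (chiA_valid eps muG chiC HchiC)) as [N [c [Hr Hc]]].
  exact (upper_run l x Hx eps Heps muG HmuG chiC HchiC N c Hr Hc).
Qed.

(** *** Lower bound: Min's strategy of the CostConsistent game, lowered *)

Section LowerBound.
Context (l : L) (x : R) (Hx : b1 <= x <= r)
  (muC : strat (CCLoc G)) (HmuC : valid_strat CC r true muC)
  (w : R) (Hw : w < OptCost G b1 e2 (l, x)).

Local Notation sB := (l, x).

Definition epsB : R := (OptCost G b1 e2 sB - w) / 2.

Lemma epsB_pos : 0 < epsB.
Proof. unfold epsB. lra. Qed.

Definition min_exits (s0 : L * R) (p : list (trans L)) : Prop :=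
  gmin G (fst (cur s0 p)) = true /\
  exists b, muC (emb_state s0) (map emb_trans p) = Disc (inr b).

Definition breakB (s0 : L * R) (p : list (trans L)) : Prop :=
  min_exits s0 p \/
  (exists q t, p = q ++ [Delay t] /\ gmin G (fst (cur s0 q)) = false /\
     snd (cur s0 q) <= r /\ r < snd (cur s0 q) + t).

Definition targetB (s0 : L * R) (p : list (trans L)) : R :=
  if excluded_middle_informative (min_exits s0 p)
  then exit_cost (cur s0 p) + epsB
  else OptCost G r e2 (cur s0 p) + epsB.

Definition muB : strat L :=
  switch_at (lower_strat G r e2 muC) breakB
    (fun s0 p => pick_min G e2 (cur s0 p) (targetB s0 p)).

Lemma muB_valid : valid_strat G e2 true muB.
Proof.
  apply switch_at_valid; [apply lower_strat_valid; auto|]. intros. apply pick_min_spec.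
Qed.

Section WithChi.
Context (chiG : strat L) (HchiG : valid_strat G e2 false chiG).

Local Notation chiB := (lift_strat G r e2 chiG).
Local Notation hG n := (play G muB chiG sB n).
Local Notation hC n := (play CC muC chiB (emb_state sB) n).
Local Notation syncB := (synced sB (breakB sB) muB chiG muC chiB).
Local Notation goalB := (cost_le G e2 sB muB chiG (w + epsB)).

Section WithRun.
Context (NC : nat) (cC : R) (HrC : reaches CC r (emb_state sB) muC chiB NC cC)
  (HcC : cC <= w).

Lemma runB_facts n m : syncB n -> (m <= n)%nat -> (m < NC)%nat ->
  ggoal G (fst (cur sB (hG m))) = None /\ exists tr, avail G e2 (cur sB (hG m)) tr.
Proof. intros HI Hmn Hm. apply (synced_facts_G _ _ _ _ _ _ n m HI Hmn), (proj2 HrC m Hm). Qed.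

Lemma exitB_cost n b : (n < NC)%nat -> syncB n ->
  hC (S n) = hC n ++ [Disc (inr b)] -> proj1_sig b = fst (cur sB (hG n)) ->
  exit_cost (cur sB (hG n)) + hprice G sB (hG n) <= w.
Proof.
  intros HnN HI HS Hb.
  destruct (synced_exit sB (breakB sB) muB chiG muC chiB n b HI HS Hb) as [g [Hg Hcost]].
  destruct (reaches_at_goal CC r _ _ _ _ _ (S n) g HrC ltac:(lia) Hg) as [_ E]. lra.
Qed.

Lemma breakB_switch n : first_split (breakB sB) [] (hG n) = Some (hG n, []) ->
  (forall m, (m < n)%nat ->
     ggoal G (fst (cur sB (hG m))) = None /\ exists tr, avail G e2 (cur sB (hG m)) tr) ->
  (exists mu', valid_strat G e2 true mu' /\ forall chi, valid_strat G e2 false chi ->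
     cost_le G e2 (cur sB (hG n)) mu' chi (targetB sB (hG n))) ->
  hprice G sB (hG n) + targetB sB (hG n) <= w + epsB -> goalB.
Proof.
  intros HF Hpre Hex Hb. set (p := hG n) in *.
  destruct (proj2 (pick_min_spec G e2 (cur sB p) (targetB sB p)) Hex (resume chiG sB p)
              (resume_valid G e2 false chiG sB p HchiG)) as [m [c' [Hsub Hc']]].
  exists (n + m)%nat, (hprice G sB p + c'). split; [|lra].
  apply (reaches_join G e2 muB chiG sB n p (pick_min G e2 (cur sB p) (targetB sB p))
           (resume chiG sB p)); auto.
  - intros k. unfold muB. rewrite switch_at_after; auto.
  - intros k. rewrite resume_at. reflexivity.
Qed.

Lemma syncB_min_step n : (n < NC)%nat -> syncB n ->
  first_split (breakB sB) [] (hG n) = None -> gmin G (fst (cur sB (hG n))) = true ->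
  syncB (S n).
Proof.
  intros HnN HI HF Hmin. destruct (proj1 HI n (le_n n)) as [EC Ht].
  pose proof (first_split_none _ _ _ HF) as HnQ. simpl in HnQ.
  pose proof (synced_next _ _ _ _ _ _ n HI) as HS. rewrite Hmin in HS.
  destruct (proj2 HrC n HnN) as [_ HCav]. rewrite (proj1 (synced_cur _ _ _ _ _ _ n HI)) in HCav.
  set (h := hG n) in *.
  assert (Hcc : avail CC r (emb_state (cur sB h)) (muC (emb_state sB) (map emb_trans h))).
  { pose proof (proj1 HmuC (emb_state sB) (map emb_trans h)) as X. rewrite cur_emb in X.
    apply X; auto. }
  destruct (lower_strat_step G r e2 Hre muC sB h Hcc (proj2 Ht))
    as [[b [Eb _]]|[Hlow [Hemb Htime]]]; [exfalso; apply HnQ; left; split; eauto|].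
  apply (synced_S _ _ _ _ _ _ n (lower_move G (muC (emb_state sB) (map emb_trans h))));
    auto; [|rewrite HS, Hemb; reflexivity|fold h; lra].
  rewrite play_S. fold h. rewrite Hmin. unfold muB. rewrite switch_at_before by exact HF.
  rewrite Hlow. reflexivity.
Qed.

(* Before the break, a move of Max either keeps the plays synchronised or is
   a delay across [r]; then the [CC] play exits and Min, switching to a
   near-optimal strategy of [G_{I2}], does at least as well. *)
Lemma syncB_max_step n : (n < NC)%nat -> syncB n ->
  first_split (breakB sB) [] (hG n) = None -> gmin G (fst (cur sB (hG n))) = false ->
  syncB (S n) \/ goalB.
Proof.
  intros HnN HI HF Hmax. destruct (proj1 HI n (le_n n)) as [EC Ht].
  destruct (runB_facts n n HI (le_n n) HnN) as [Hng Hav].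
  pose proof (synced_next _ _ _ _ _ _ n HI) as HS. rewrite Hmax in HS.
  assert (HGS : hG (S n) = hG n ++ [chiG sB (hG n)]) by (rewrite play_S, Hmax; reflexivity).
  set (h := hG n) in *.
  assert (Hc0 : avail G e2 (cur sB h) (chiG sB h)) by (apply (proj1 HchiG); auto).
  destruct (lift_strat_step G r e2 chiG sB h Hc0 Hng (proj2 Ht))
    as [[Hl Htime]|[t [b [Et [Hcross [_ [Hb Hl]]]]]]].
  - left. apply (synced_S _ _ _ _ _ _ n (chiG sB h)); auto; [rewrite HS, Hl; reflexivity|fold h; lra].
  - right. rewrite Et in Hc0, HGS. destruct Hc0 as [Ht0 [Hu Hte]].
    assert (Hexit := exitB_cost n b HnN HI ltac:(rewrite HS, Hl; reflexivity) Hb). fold h in Hexit.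
    assert (HQ : breakB sB (hG (S n))).
    { right. exists h, t. rewrite HGS. repeat split; auto; lra. }
    assert (HFS : first_split (breakB sB) [] (hG (S n)) = Some (hG (S n), [])).
    { rewrite HGS in HQ |- *. destruct (first_split_snoc (breakB sB) [] h (Delay t) HF)
        as [N0|[S0 _]]; [|exact S0].
      exfalso. apply (first_split_none _ _ _ N0). exact HQ. }
    assert (Ecur : cur sB (hG (S n)) = (fst (cur sB h), snd (cur sB h) + t))
      by (rewrite HGS, cur_snoc; reflexivity).
    assert (Htarget : targetB sB (hG (S n)) = OptCost G r e2 (cur sB (hG (S n))) + epsB).
    { unfold targetB. destruct (excluded_middle_informative _) as [[Hm _]|_]; [|reflexivity].
      rewrite Ecur in Hm. simpl in Hm. congruence. }
    apply (breakB_switch (S n) HFS).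
    + intros m Hm. apply (runB_facts n m HI); lia.
    + rewrite Htarget, Ecur. destruct (value_I2 (fst (cur sB h)) (snd (cur sB h) + t)) as [_ [H2 _]];
        [lra|]. apply H2, epsB_pos.
    + rewrite Htarget, Ecur, HGS, hprice_app. simpl.
      pose proof (exit_cost_ge_cross (cur sB h) t Hmax Hng Hu ltac:(lra) Hte). lra.
Qed.

(* At the break, Min exits (a crossing delay of Max would have been detected
   one step earlier); Min then waits until [r] and plays near-optimally. *)
Lemma breakB_now n : (n < NC)%nat -> syncB n ->
  first_split (breakB sB) [] (hG n) = Some (hG n, []) -> breakB sB (hG n) -> goalB.
Proof.
  intros HnN HI HF HQ. destruct (proj1 HI n (le_n n)) as [EC Ht].
  destruct (runB_facts n n HI (le_n n) HnN) as [Hng Hav].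
  pose proof (synced_next _ _ _ _ _ _ n HI) as HS.
  set (h := hG n) in *.
  destruct HQ as [[Hmin [b Eb]]|[q [t [Eq [_ [Hq1 Hq2]]]]]].
  - assert (Hab : avail CC r (emb_state (cur sB h)) (Disc (inr b))).
    { rewrite <- Eb. pose proof (proj1 HmuC (emb_state sB) (map emb_trans h)) as X.
      rewrite cur_emb in X. apply X; [exact Hmin|].
      destruct Hav as [tr Htr]. eapply avail_in_CC; eauto. }
    simpl in Hab. destruct (nonurgent_prop G _ (proj2_sig b)) as [_ Hu]. rewrite Hab in Hu.
    rewrite Hmin, Eb in HS.
    assert (Hexit := exitB_cost n b HnN HI HS Hab). fold h in Hexit.
    assert (Htarget : targetB sB h = exit_cost (cur sB h) + epsB).
    { unfold targetB. destruct (excluded_middle_informative _) as [_|n0]; [reflexivity|].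
      exfalso. apply n0. split; eauto. }
    apply (breakB_switch n HF); [intros m Hm; apply (runB_facts n m HI); lia| |fold h; lra].
    fold h. rewrite Htarget. apply min_wait_until_r; auto; [lra|apply epsB_pos].
  - exfalso. rewrite Eq, cur_snoc in Ht. simpl in Ht. lra.
Qed.

(* Either the plays stay synchronised up to the goal visit of the [CC] run,
   whose cost [cC <= w] then is the cost of the [G] run, or a break occurs. *)
Lemma lower_run : goalB.
Proof.
  destruct (synced_until sB (breakB sB) muB chiG muC chiB NC goalB) as [HN|Hgood]; auto.
  - apply synced_0. simpl. lra.
  - intros n HnN HI.
    destruct (first_split_growing (breakB sB) (fun m => hG m) n eq_refl) as [HF|[HF HQ]].
    + intros m. eexists. apply play_S.
    + apply (proj2 HI).
    + destruct (gmin G (fst (cur sB (hG n)))) eqn:Eo.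
      * left. apply syncB_min_step; auto.
      * apply syncB_max_step; auto.
    + right. apply (breakB_now n); auto.
  - exists NC, cC. pose proof epsB_pos.
    split; [apply (synced_reaches_G _ _ _ _ _ _ NC cC HN HrC)|lra].
Qed.

End WithRun.
End WithChi.
End LowerBound.

Lemma lower_bound l x : b1 <= x <= r ->
  forall muC, valid_strat CC r true muC ->
  forall w, w < OptCost G b1 e2 (l, x) ->
  exists chiC, valid_strat CC r false chiC /\ ~ cost_le CC r (inl l, x) muC chiC w.
Proof.
  intros Hx muC HmuC w Hw. apply NNPP. intros Hn.
  destruct (OptCost_spec G e2 b1 (l, x) ltac:(apply HG; lra)) as [_ [_ Hopt]].
  destruct (Hopt (muB l x muC w) (muB_valid l x muC HmuC w) (w + epsB l x w))
    as [chiG [HchiG Hnc]]; [unfold epsB; lra|].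
  apply Hnc. destruct (classic (cost_le CC r (inl l, x) muC (lift_strat G r e2 chiG) w))
    as [[NC [cC [HrC HcC]]]|Hc]; [|exfalso; apply Hn; eexists; split; [apply lift_strat_valid; eauto|exact Hc]].
  exact (lower_run l x Hx muC HmuC w Hw chiG HchiG NC cC HrC HcC).
Qed.

End Bounds.

Theorem lemma2 (L : Type) (G : Game L) (b1 r e2 : R) :
  game_ok G ->
  (forall b e, 0 <= b -> b <= e -> e <= 1 ->
     forall (l : L) (x : R), b <= x <= e -> exists v, isOptCost G b e (l, x) v) ->
  0 <= b1 -> b1 <= r -> r <= e2 -> e2 <= 1 ->
  forall (l : L) (x : R),
    (b1 <= x <= r ->
       OptCost (CostConsistent G r e2) b1 r (inl l, x) = OptCost G b1 e2 (l, x)) /\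
    (r < x <= e2 ->
       OptCost G r e2 (l, x) = OptCost G b1 e2 (l, x)).
Proof.
  intros _ HG Hb1 Hb1r Hre He2 l x. split.
  - intros Hx.
    assert (Hcc : isOptCost (CostConsistent G r e2) b1 r (inl l, x) (OptCost G b1 e2 (l, x))).
    { split; [simpl; lra|]. split.
      - intros eps Heps. exact (upper_bound G b1 r e2 HG Hb1 Hb1r Hre He2 l x eps Hx Heps).
      - exact (lower_bound G b1 r e2 HG Hb1 Hb1r Hre He2 l x Hx). }
    apply (isOptCost_unique (CostConsistent G r e2) r b1 b1 (inl l, x));
      [apply OptCost_spec; eauto|exact Hcc].
  - intros Hx.
    apply (isOptCost_unique G e2 r b1 (l, x)); apply OptCost_spec, HG; lra.
Qed.
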